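(* Let $U=(E,\mathcal{D},\rho)$ be a U-matroid with lattice of flats $\L$. Let $\mathcal{D}'\subseteq\mathcal{D}$ be an accessible distributive sublattice, and let $\L'$ be the lattice of flats of the restriction $(E,\mathcal{D}',\rho|_{\mathcal{D}'})$. Then \[\L'=\{\inf_{\mathcal{D}'}(A): A\in\L\}.\]
   Context: An accessible distributive lattice on a finite set $E$ is a family $\mathcal{D}\subseteq 2^E$ containing $\emptyset$ and $E$, closed under union and intersection, such that every nonempty $A\in\mathcal{D}$ contains some $x$ with $A\setminus\{x\}\in\mathcal{D}$. A U-matroid is a triple $(E,\mathcal{D},\rho)$ with $\rho:\mathcal{D}\to\mathbb{N}$ satisfying $\rho(\emptyset)=0$; $\rho(A)\le\rho(B)$ whenever $A\subseteq B$; $\rho(A)+\rho(B)\ge\rho(A\cup B)+\rho(A\cap B)$; and $\rho(A\cup\{e\})-\rho(A)\le1$ whenever $A,A\cup\{e\}\in\mathcal{D}$. The lattice of flats of $(E,\mathcal{D},\rho)$ is $\L=\{A\in\mathcal{D}:\rho(B)>\rho(A)\text{ for all }B\in\mathcal{D}\text{ with }B\supsetneq A\}$. For $A\subseteq E$, $\inf_{\mathcal{D}'}(A)=\bigcup\{B\in\mathcal{D}':B\subseteq A\}$. *)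

From mathcomp Require Import all_boot.
Set Implicit Arguments. Unset Strict Implicit. Unset Printing Implicit Defensive.

Section UMatroid.
Variable E : finType.

Definition accessible_distr_lattice (D : {set {set E}}) : Prop :=
  [/\ set0 \in D, [set: E] \in D,
      (forall A B, A \in D -> B \in D -> A :|: B \in D),
      (forall A B, A \in D -> B \in D -> A :&: B \in D) &
      (forall A, A \in D -> A != set0 -> exists2 x, x \in A & A :\ x \in D)].

(* rho is a total function on {set E}; only its values on D matter. *)
Definition umatroid (D : {set {set E}}) (rho : {set E} -> nat) : Prop :=
  [/\ accessible_distr_lattice D,
      rho set0 = 0,
      (forall A B, A \in D -> B \in D -> A \subset B -> rho A <= rho B),
      (forall A B, A \in D -> B \in D ->
         rho (A :|: B) + rho (A :&: B) <= rho A + rho B) &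
      (forall A e, A \in D -> A :|: [set e] \in D -> rho (A :|: [set e]) <= rho A + 1)].

Definition flats (D : {set {set E}}) (rho : {set E} -> nat) : {set {set E}} :=
  [set A in D | [forall B in D, (A \proper B) ==> (rho A < rho B)]].

Definition infD (D' : {set {set E}}) (A : {set E}) : {set E} :=
  \bigcup_(B in D' | B \subset A) B.

End UMatroid.

(** Every flat [F] of the restriction to [D'] lies in a flat [A] of [D] of the
    same rank (a largest member of [D] above [F] with rank [rho F]); then
    [inf_D' A] sits between [F] and [A], has the same rank as [F], and so
    equals [F] because [F] is a flat.  Conversely, if [A] is a flat of [D] and
    [B] in [D'] properly contains [inf_D' A], then [B] is not below [A], so
    [rho (A :|: B) > rho A], and submodularity yields
    [rho B > rho (A :&: B) >= rho (inf_D' A)]. *)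
From mathcomp Require Import all_boot.

Set Implicit Arguments.
Unset Strict Implicit.
Unset Printing Implicit Defensive.

Section Infimum.
Variables (E : finType) (D' : {set {set E}}).

Lemma infD_sub (A : {set E}) : infD D' A \subset A.
Proof. by apply/bigcupsP => B /andP[]. Qed.

Lemma sub_infD (A B : {set E}) : B \in D' -> B \subset A -> B \subset infD D' A.
Proof. by move=> BD' BA; apply: (bigcup_sup B); rewrite BD' BA. Qed.

Hypotheses (D'0 : set0 \in D')
           (D'U : forall A B, A \in D' -> B \in D' -> A :|: B \in D').

Lemma infD_mem (A : {set E}) : infD D' A \in D'.
Proof.
apply: (big_ind (fun X => X \in D')) => //.
by move=> B /andP[].
Qed.

End Infimum.

Lemma flatP (E : finType) (D : {set {set E}}) (rho : {set E} -> nat)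
    (A : {set E}) :
  reflect (A \in D /\ forall B, B \in D -> A \proper B -> rho A < rho B)
          (A \in flats D rho).
Proof.
rewrite inE; apply: (iffP andP) => [[AD /forall_inP Aflat] | [AD Aflat]].
  by split=> // B /Aflat /implyP.
by split=> //; apply/forall_inP => B /Aflat /implyP.
Qed.

Section Flats.
Variables (E : finType) (D : {set {set E}}) (rho : {set E} -> nat).

Hypothesis rho_mono :
  forall A B, A \in D -> B \in D -> A \subset B -> rho A <= rho B.

Lemma flat_above (F : {set E}) :
  F \in D -> exists A, [/\ A \in flats D rho, F \subset A & rho A = rho F].
Proof.
move=> FD; pose S := [set B in D | (F \subset B) && (rho B == rho F)].
have FS : F \in S by rewrite inE FD subxx eqxx.
case: (@arg_maxnP _ F [in S] (fun B => #|B|) FS) => A.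
rewrite [A \in S]inE => /and3P[AD FA /eqP rA] Amax.
exists A; split=> //; apply/flatP; split=> // B BD AB.
rewrite ltn_neqAle rho_mono ?(proper_sub AB) // andbT; apply/eqP => rAB.
have BS : B \in S by rewrite inE BD -rAB rA eqxx (subset_trans FA (proper_sub AB)).
by have : #|B| <= #|A| := Amax B BS; rewrite leqNgt proper_card.
Qed.

Variable D' : {set {set E}}.
Hypotheses (D'0 : set0 \in D')
           (D'U : forall A B, A \in D' -> B \in D' -> A :|: B \in D')
           (sD'D : D' \subset D).

Lemma flat_restr_infD (F : {set E}) :
  F \in flats D' rho -> exists2 A, A \in flats D rho & F = infD D' A.
Proof.
case/flatP=> FD' Fflat.
have [A [Aflat FA rA]] := flat_above (subsetP sD'D F FD').
exists A => //; have iD' := infD_mem D'0 D'U A.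
have Fi : F \subset infD D' A by exact: sub_infD.
apply/eqP; rewrite eqEsubset Fi /=; apply: contraT => iF.
have Fpi : F \proper infD D' A by rewrite properE Fi.
have /flatP[AD _] := Aflat.
have : rho (infD D' A) <= rho F.
  by rewrite -rA rho_mono ?infD_sub // (subsetP sD'D).
by rewrite leqNgt Fflat.
Qed.

Hypotheses (DU : forall A B, A \in D -> B \in D -> A :|: B \in D)
           (DI : forall A B, A \in D -> B \in D -> A :&: B \in D)
           (rho_submod : forall A B, A \in D -> B \in D ->
              rho (A :|: B) + rho (A :&: B) <= rho A + rho B).

Lemma infD_flat (A : {set E}) : A \in flats D rho -> infD D' A \in flats D' rho.
Proof.
case/flatP=> AD Aflat; apply/flatP; split=> [|B BD' iB]; first exact: infD_mem.
have BD := subsetP sD'D B BD'.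
have nBA : ~~ (B \subset A).
  by apply: contraL iB => /(sub_infD BD'); rewrite properE => ->; rewrite andbF.
have AB : A \proper A :|: B.
  rewrite properE subsetUl /=.
  by apply: contra nBA; apply: subset_trans (subsetUr A B).
have rAB := Aflat _ (DU AD BD) AB.
have : rho (infD D' A) <= rho (A :&: B).
  have iD : infD D' A \in D := subsetP sD'D _ (infD_mem D'0 D'U A).
  apply: rho_mono => //; first exact: DI.
  by rewrite subsetI infD_sub (proper_sub iB).
move/leq_ltn_trans; apply; rewrite -(ltn_add2l (rho A)).
by apply: leq_trans (rho_submod AD BD); rewrite ltn_add2r.
Qed.

End Flats.

Theorem theorem4p20 (E : finType) (D D' : {set {set E}}) (rho : {set E} -> nat) :
  umatroid D rho ->
  accessible_distr_lattice D' -> D' \subset D ->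
  flats D' rho = [set infD D' A | A in flats D rho].
Proof.
move=> [[_ _ DU DI _] _ rho_mono rho_submod _] [D'0 _ D'U _ _] sD'D.
apply/setP => F; apply/idP/imsetP.
  exact: flat_restr_infD.
by case=> A Aflat ->;
  apply: (infD_flat rho_mono D'0 D'U sD'D DU DI rho_submod Aflat).
Qed.
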